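(* Let $\Gamma_1=(V_1,\nu_1,\mu_1)$ and $\Gamma_2=(V_2,\nu_2,\mu_2)$ be fuzzy graphs and $\Gamma=\Gamma_1\square\Gamma_2$ their Cartesian product. Then $$\sigma^*(\Gamma)=\sigma^*(\Gamma_1)+\sigma^*(\Gamma_2).$$
   Context: A fuzzy graph $\Gamma=(V,\nu,\mu)$ consists of a finite nonempty vertex set $V$, a map $\nu:V\to[0,1]$, and a symmetric map $\mu:V\times V\to[0,1]$ with $\mu(u,v)\le\min(\nu(u),\nu(v))$. The fuzzy degree is $d_\Gamma(v)=\sum_{u\ne v}\mu(v,u)$, the fuzzy size is $\mathrm{ew}(\Gamma)=\frac12\sum_v d_\Gamma(v)$, and with $n=|V|$, $\lambda=2\,\mathrm{ew}(\Gamma)/n$, the fuzzy sigma index is $\sigma^*(\Gamma)=\frac1n\sum_{v}(d_\Gamma(v)-\lambda)^2$. The Cartesian product $\Gamma_1\square\Gamma_2$ is the fuzzy graph on $V_1\times V_2$ whose edge membership is $\mu((u,v),(u,v'))=\mu_2(v,v')$ for $v\ne v'$, $\mu((u,v),(u',v))=\mu_1(u,u')$ for $u\neq u'$, and $0$ for all other pairs of distinct vertices, so that $d_\Gamma(u,v)=d_{\Gamma_1}(u)+d_{\Gamma_2}(v)$. *)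

From mathcomp Require Import all_boot all_order all_algebra.
Set Implicit Arguments. Unset Strict Implicit. Unset Printing Implicit Defensive.
Import Order.TTheory GRing.Theory Num.Theory.
Local Open Scope ring_scope.

Section FuzzyGraphs.
Variable R : realFieldType.

(* A fuzzy graph on a finite vertex type V (the vertex set is all of V). *)
Record fuzzy_graph (V : finType) := FuzzyGraph {
  fnu : V -> R;
  fmu : V -> V -> R
}.

Definition is_fuzzy_graph (V : finType) (G : fuzzy_graph V) : Prop :=
  (forall v, 0 <= fnu G v <= 1) /\
  (forall u v, 0 <= fmu G u v <= 1) /\
  (forall u v, fmu G u v = fmu G v u) /\
  (forall u v, fmu G u v <= Num.min (fnu G u) (fnu G v)).

Definition fdeg (V : finType) (G : fuzzy_graph V) (v : V) : R :=
  \sum_(u : V | u != v) fmu G v u.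

Definition fsize (V : finType) (G : fuzzy_graph V) : R :=
  (\sum_(v : V) fdeg G v) / 2.

Definition favg (V : finType) (G : fuzzy_graph V) : R :=
  2 * fsize G / #|V|%:R.

Definition fsigma (V : finType) (G : fuzzy_graph V) : R :=
  (\sum_(v : V) (fdeg G v - favg G) ^+ 2) / #|V|%:R.

Definition cart_prod (V1 V2 : finType) (G1 : fuzzy_graph V1)
    (G2 : fuzzy_graph V2) : fuzzy_graph (V1 * V2)%type :=
  FuzzyGraph
    (fun x : V1 * V2 => Num.min (fnu G1 x.1) (fnu G2 x.2))
    (fun x y : V1 * V2 =>
       if (x.1 == y.1) && (x.2 != y.2) then fmu G2 x.2 y.2
       else if (x.2 == y.2) && (x.1 != y.1) then fmu G1 x.1 y.1
       else 0).

End FuzzyGraphs.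

(* The fuzzy sigma index is the variance of the degree of a uniformly random
   vertex, and lambda is its mean.  A vertex (u, v) of the Cartesian product has
   degree d1 u + d2 v, and for a uniform vertex of V1 * V2 the two coordinates
   are independent uniform vertices.  Variances of independent summands add: the
   cross term averages to the product of the mean deviations of d1 and d2, which
   both vanish. *)
From mathcomp Require Import all_boot all_order all_algebra.
From mathcomp Require Import ring.
Set Implicit Arguments. Unset Strict Implicit. Unset Printing Implicit Defensive.
Import Order.TTheory GRing.Theory Num.Theory.
Local Open Scope ring_scope.

Section UniformMean.
Variable R : realFieldType.

Definition mean (T : finType) (f : T -> R) : R := (\sum_x f x) / #|T|%:R.

Definition variance (T : finType) (f : T -> R) : R :=
  mean (fun x => (f x - mean f) ^+ 2).

Lemma eq_mean (T : finType) (f g : T -> R) : f =1 g -> mean f = mean g.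
Proof. by move=> fg; rewrite /mean (eq_bigr _ (fun x _ => fg x)). Qed.

Lemma eq_variance (T : finType) (f g : T -> R) :
  f =1 g -> variance f = variance g.
Proof.
by move=> fg; rewrite /variance (eq_mean fg); apply: eq_mean => x; rewrite fg.
Qed.

Lemma meanD (T : finType) (f g : T -> R) :
  mean (fun x => f x + g x) = mean f + mean g.
Proof. by rewrite /mean big_split mulrDl. Qed.

Lemma mean_centered (T : finType) (f : T -> R) :
  (0 < #|T|)%N -> mean (fun x => f x - mean f) = 0.
Proof.
move=> T_gt0; rewrite /mean sumrB sumr_const -[X in _ - X]mulr_natr.
by rewrite divfK ?subrr ?mul0r // pnatr_eq0 -lt0n.
Qed.

Variables V1 V2 : finType.

Lemma mean_fst (f : V1 -> R) :
  (0 < #|V2|)%N -> mean (fun x : V1 * V2 => f x.1) = mean f.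
Proof.
move=> V2_gt0; rewrite /mean -(pair_bigA _ (fun a (_ : V2) => f a)) /=.
rewrite card_prod natrM.
under eq_bigr do rewrite sumr_const -mulr_natr.
by rewrite -mulr_suml invfM mulrA mulrAC mulfK // pnatr_eq0 -lt0n.
Qed.

Lemma mean_snd (g : V2 -> R) :
  (0 < #|V1|)%N -> mean (fun x : V1 * V2 => g x.2) = mean g.
Proof.
move=> V1_gt0; rewrite /mean -(pair_bigA _ (fun (_ : V1) b => g b)) /=.
rewrite sumr_const -[X in X / _]mulr_natr card_prod natrM invfM mulrA.
by rewrite mulfK // pnatr_eq0 -lt0n.
Qed.

Lemma mean_mul_prod (f : V1 -> R) (g : V2 -> R) :
  mean (fun x : V1 * V2 => f x.1 * g x.2) = mean f * mean g.
Proof.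
rewrite /mean -(pair_bigA _ (fun a b => f a * g b)) /= -big_distrlr /=.
by rewrite card_prod natrM invfM mulrACA.
Qed.

Lemma variance_add_prod (f : V1 -> R) (g : V2 -> R) :
  (0 < #|V1|)%N -> (0 < #|V2|)%N ->
  variance (fun x : V1 * V2 => f x.1 + g x.2) = variance f + variance g.
Proof.
move=> V1_gt0 V2_gt0.
rewrite /variance meanD mean_fst // mean_snd //.
set u := fun a => f a - mean f; set v := fun b => g b - mean g.
rewrite (@eq_mean _ _
  (fun x => (u x.1 ^+ 2 + v x.2 ^+ 2) + (2 * u x.1) * v x.2)); last by move=> x; rewrite /u /v; ring.
rewrite meanD (mean_mul_prod (fun a => 2 * u a) v) meanD.
rewrite (mean_fst (fun a => u a ^+ 2)) // (mean_snd (fun b => v b ^+ 2)) //.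
by rewrite [mean v]mean_centered // mulr0 addr0.
Qed.

End UniformMean.

Lemma favgE (R : realFieldType) (V : finType) (G : fuzzy_graph R V) :
  favg G = mean (fdeg G).
Proof. by rewrite /favg /fsize /mean mulrCA divff ?mulr1 // pnatr_eq0. Qed.

Lemma fsigmaE (R : realFieldType) (V : finType) (G : fuzzy_graph R V) :
  fsigma G = variance (fdeg G).
Proof. by rewrite /fsigma favgE. Qed.

Lemma fdeg_loopless (R : realFieldType) (V : finType) (G : fuzzy_graph R V)
    (v : V) :
  fmu G v v = 0 -> fdeg G v = \sum_u fmu G v u.
Proof. by move=> Gvv; rewrite /fdeg [RHS](bigD1 v) //= Gvv add0r. Qed.

Lemma fdeg_cart_prod (R : realFieldType) (V1 V2 : finType)
    (G1 : fuzzy_graph R V1) (G2 : fuzzy_graph R V2) (x : V1 * V2) :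
  fdeg (cart_prod G1 G2) x = fdeg G1 x.1 + fdeg G2 x.2.
Proof.
case: x => u v; rewrite fdeg_loopless /=; last by rewrite !eqxx.
rewrite -(pair_bigA _ (fun a b => fmu (cart_prod G1 G2) (u, v) (a, b))) /=.
rewrite (bigD1 u) //= eqxx /= addrC /fdeg; congr (_ + _).
- apply: eq_bigr => a au; have ua : u != a by rewrite eq_sym.
  rewrite (negbTE ua) /= -big_mkcond (big_pred1 v) // => b /=.
  by rewrite andbT eq_sym.
- by rewrite [RHS]big_mkcond; apply: eq_bigr => b _; rewrite andbF eq_sym.
Qed.

Theorem theorem2p6 (R : realFieldType) (V1 V2 : finType)
  (G1 : fuzzy_graph R V1) (G2 : fuzzy_graph R V2) :
  (0 < #|V1|)%N -> (0 < #|V2|)%N ->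
  is_fuzzy_graph G1 -> is_fuzzy_graph G2 ->
  fsigma (cart_prod G1 G2) = fsigma G1 + fsigma G2.
Proof.
move=> V1_gt0 V2_gt0 _ _.
by rewrite !fsigmaE (eq_variance (fdeg_cart_prod G1 G2)) variance_add_prod.
Qed.
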